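(* Let $k$ be a field and $\mathsf{E}$ a left strictly locally finite $k$-linear category. Then the class of right $\mathsf{E}$-modules isomorphic to $\Upsilon_{\mathsf{E}^{op}}(\mathcal{N})$ for some locally finite right $\mathcal{C}_\mathsf{E}$-comodule $\mathcal{N}$ is closed under extensions in the category of right $\mathsf{E}$-modules (and in the category of locally finite right $\mathsf{E}$-modules): if $0\to L\to M\to N\to0$ is a short exact sequence of right $\mathsf{E}$-modules and $L,N$ belong to this class, then so does $M$.
   Context: A small $k$-linear category $\mathsf{E}$ has $k$-vector spaces $\operatorname{Hom}_\mathsf{E}(x,y)$, $k$-bilinear associative composition and identities with $\mathrm{id}_x\ne0$. A right $\mathsf{E}$-module is a $k$-linear functor $\mathsf{E}^{op}\to k\text{-Vect}$ (action maps $\operatorname{Hom}_\mathsf{E}(x,y)\otimes_kN(y)\to N(x)$); locally finite if all values are finite-dimensional. Write $x\preceq y$ if there are $n\ge1$ and objects $x=z_0,\dots,z_n=y$ with $\operatorname{Hom}_\mathsf{E}(z_{i-1},z_i)\neq0$ for all $i$; $x\prec y$ means $x\preceq y$ and not $y\preceq x$. $\mathsf{E}$ is locally finite if all Hom spaces are finite-dimensional and every $\{z:x\preceq z\preceq y\}$ is finite; left strictly locally finite if moreover for every $y$ there is a finite set $X_y$ of objects with $x\prec y$ for $x\in X_y$ such that every $f:z\to y$ with $z\prec y$ equals $\sum_{i=1}^nh_ig_i$ ($n\ge0$) with $g_i:z\to x_i$, $h_i:x_i\to y$, $x_i\in X_y$. $\mathcal{C}_\mathsf{E}=\bigoplus_{x,y}\mathcal{C}^{x,y}$,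 $\mathcal{C}^{x,y}=\operatorname{Hom}_\mathsf{E}(x,y)^*$; counit zero on $\mathcal{C}^{x,y}$ for $x\ne y$, evaluation at $\mathrm{id}_x$ on $\mathcal{C}^{x,x}$; comultiplication $\mathcal{C}^{x,y}\to\bigoplus_z\mathcal{C}^{x,z}\otimes\mathcal{C}^{z,y}$ dual to composition $g\otimes h\mapsto hg$. For a right comodule $(\mathcal{N},\nu:\mathcal{N}\to\mathcal{N}\otimes\mathcal{C}_\mathsf{E})$, $\varphi\cdot n=(\mathrm{id}\otimes\varphi)\nu(n)$. With $e_x$ evaluation at $\mathrm{id}_x$ on $\mathcal{C}^{x,x}$ (zero elsewhere) and $\mathrm{ev}_f$, for $f\in\operatorname{Hom}_\mathsf{E}(x,y)$, evaluation at $f$ on $\mathcal{C}^{x,y}$ (zero elsewhere): $\Upsilon_{\mathsf{E}^{op}}(\mathcal{N})(x)=e_x\cdot\mathcal{N}$ and $f$ acts $e_y\cdot\mathcal{N}\to e_x\cdot\mathcal{N}$ by $n\mapsto\mathrm{ev}_f\cdot n$. $\mathcal{N}$ is locally finite if $\Upsilon_{\mathsf{E}^{op}}(\mathcal{N})$ is. *)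

From HB Require Import structures.
From mathcomp Require Import all_boot all_algebra.
From Stdlib Require Import Relations.
From Stdlib Require List.

Set Implicit Arguments.
Unset Strict Implicit.
Unset Printing Implicit Defensive.

Import GRing.Theory.
Local Open Scope ring_scope.

(* [ccomp g h] is the composite  h g  of  g : x -> y  and  h : y -> z.       *)
Record kcat (k : fieldType) := KCat {
  cobj : Type;
  chom : cobj -> cobj -> lmodType k;
  ccomp : forall x y z, chom x y -> chom y z -> chom x z;
  cid : forall x, chom x x;
  comp_linl : forall x y z (h : chom y z) (a : k) (g1 g2 : chom x y),
      ccomp (a *: g1 + g2) h = a *: ccomp g1 h + ccomp g2 h;
  comp_linr : forall x y z (g : chom x y) (a : k) (h1 h2 : chom y z),
      ccomp g (a *: h1 + h2) = a *: ccomp g h1 + ccomp g h2;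
  compA : forall w x y z (f : chom w x) (g : chom x y) (h : chom y z),
      ccomp (ccomp f g) h = ccomp f (ccomp g h);
  comp1f : forall x y (f : chom x y), ccomp (cid x) f = f;
  compf1 : forall x y (f : chom x y), ccomp f (cid y) = f;
  idm_neq0 : forall x, cid x != 0
}.
Arguments ccomp {k E x y z} : rename.
Arguments cid {k E} x : rename.
Arguments chom {k} E : rename.

Section Category.
Variables (k : fieldType) (E : kcat k).

Definition findim (V : lmodType k) : Prop :=
  exists (n : nat) (b : 'I_n -> V), forall v : V,
    exists c : 'I_n -> k, v = \sum_(i < n) c i *: b i.

Definition hom_nz (a b : cobj E) : Prop := exists f : chom E a b, f != 0.

Definition preceq (x y : cobj E) : Prop := clos_trans (cobj E) hom_nz x y.
Definition prec (x y : cobj E) : Prop := preceq x y /\ ~ preceq y x.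

Definition locally_finite_cat : Prop :=
  (forall x y, findim (chom E x y)) /\
  (forall x y, exists s : seq (cobj E),
      forall z, preceq x z -> preceq z y -> List.In z s).

Record factor (z y : cobj E) := Factor {
  fmid : cobj E;
  fleft : chom E z fmid;
  fright : chom E fmid y
}.

Definition left_strictly_locally_finite : Prop :=
  locally_finite_cat /\
  forall y, exists Xy : seq (cobj E),
    (forall x, List.In x Xy -> prec x y) /\
    (forall z (f : chom E z y), prec z y ->
       exists l : seq (factor z y),
         (forall t, List.In t l -> List.In (fmid t) Xy) /\
         f = \sum_(t <- l) ccomp (fleft t) (fright t)).

(* Right E-modules = k-linear functors E^op -> k-Vect.                      *)
(* [mact m f] for m in M(y), f : x -> y, is M(f)(m) in M(x).                *)
Record rmod := RMod {
  mval : cobj E -> lmodType k;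
  mact : forall x y, mval y -> chom E x y -> mval x;
  mact_linl : forall x y (f : chom E x y) (a : k) (m1 m2 : mval y),
      mact (a *: m1 + m2) f = a *: mact m1 f + mact m2 f;
  mact_linr : forall x y (m : mval y) (a : k) (f1 f2 : chom E x y),
      mact m (a *: f1 + f2) = a *: mact m f1 + mact m f2;
  mact_id : forall x (m : mval x), mact m (cid x) = m;
  mact_comp : forall x y z (g : chom E x y) (h : chom E y z) (m : mval z),
      mact (mact m h) g = mact m (ccomp g h)
}.

Definition locally_finite_rmod (M : rmod) : Prop :=
  forall x, findim (mval M x).

Record rmod_hom (M N : rmod) := RModHom {
  mhom : forall x, {linear mval M x -> mval N x};
  mhom_nat : forall x y (f : chom E x y) (m : mval M y),
      mhom x (mact m f) = mact (mhom y m) f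
}.

Definition rmod_iso (M N : rmod) : Prop :=
  exists phi : rmod_hom M N, forall x, bijective (mhom phi x).

Definition short_exact (L M N : rmod) (a : rmod_hom L M) (b : rmod_hom M N)
  : Prop :=
  forall x,
    injective (mhom a x) /\
    (forall n : mval N x, exists m, mhom b x m = n) /\
    (forall m : mval M x, mhom b x m = 0 <-> exists l, mhom a x l = m).

(* Right comodules over C_E = (+)_{x,y} Hom(x,y)^*.                         *)
(* Since all Hom(x,y) are finite-dimensional, N (x) C^{x,y} is identified   *)
(* with linear maps Hom(x,y) -> N; a coaction nu is thus encoded by         *)
(*    rho x y n f = (id (x) ev_f) (nu n) = ev_f . n ,   f : x -> y,         *)
(* bilinear, of finite support in (x,y) for each n (direct sum), with the   *)
(* counit and coassociativity axioms written out componentwise.             *)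
Record rcomod := RComod {
  cval : lmodType k;
  rho : forall x y, cval -> chom E x y -> cval;
  rho_linl : forall x y (f : chom E x y) (a : k) (n1 n2 : cval),
      rho (a *: n1 + n2) f = a *: rho n1 f + rho n2 f;
  rho_linr : forall x y (n : cval) (a : k) (f1 f2 : chom E x y),
      rho n (a *: f1 + f2) = a *: rho n f1 + rho n f2;
  (* nu(n) lies in the direct sum: finitely many nonzero components *)
  rho_fin : forall n : cval, exists s : seq (cobj E * cobj E)%type,
      forall x y, ~ List.In (x, y) s -> forall f : chom E x y, rho n f = 0;
  (* counit: (id (x) eps) nu = id, eps = sum_x ev_{id_x} *)
  rho_counit : forall (n : cval) (s : seq (cobj E)), List.NoDup s ->
      (forall x, ~ List.In x s -> rho n (cid x) = 0) ->
      \sum_(x <- s) rho n (cid x) = n;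
  (* coassociativity: (nu (x) id) nu = (id (x) Delta) nu *)
  rho_coassoc : forall x z y (g : chom E x z) (h : chom E z y) (n : cval),
      rho (rho n h) g = rho n (ccomp g h);
  rho_coassoc0 : forall a b c d (g : chom E a b) (h : chom E c d) (n : cval),
      b <> c -> rho (rho n h) g = 0
}.

End Category.

Arguments rmod {k} E.
Arguments rcomod {k} E.
Arguments mact {k E} M {x y} : rename.
Arguments rho {k E} N {x y} : rename.

(* The functor Upsilon_{E^op}: Upsilon(N)(x) = e_x . N, where               *)
(* e_x . n = rho n (cid x).  We realise e_x . N as the subspace of fixed    *)
(* points of e_x (equal to its image, since e_x is idempotent by            *)
(* coassociativity).                                                        *)
Section Upsilon.
Variables (k : fieldType) (E : kcat k) (N : rcomod E) (x : cobj E).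

Definition ex (n : cval N) : cval N := rho N n (cid x).

Definition ups_pred : {pred cval N} := fun n => ex n == n.

Lemma ups_closed : subsemimod_closed ups_pred.
Proof.
have lin : forall (a : k) (n1 n2 : cval N), ex (a *: n1 + n2) = a *: ex n1 + ex n2.
  by move=> a n1 n2; rewrite /ex rho_linl.
have ex0 : ex 0 = 0.
  have := lin (-1) 0 0; rewrite scaler0 addr0 => ->.
  by rewrite scaleN1r addNr.
split; first split.
- by rewrite unfold_in /ups_pred ex0.
- move=> u v; rewrite !unfold_in /ups_pred => /eqP hu /eqP hv.
  by have := lin 1 u v; rewrite !scale1r hu hv => ->.
- move=> a u; rewrite !unfold_in /ups_pred => /eqP hu.
  by have := lin a u 0; rewrite !addr0 ex0 addr0 hu => ->.
Qed.

HB.instance Definition _ := GRing.isSubmodClosed.Build k (cval N) ups_pred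
  ups_closed.

Record upsT := UpsT { uval : cval N; _ : uval \in ups_pred }.

HB.instance Definition _ := [isSub for uval].
HB.instance Definition _ := [Choice of upsT by <:].
HB.instance Definition _ := [SubChoice_isSubLmodule of upsT by <:].

End Upsilon.

Arguments ex {k E} N x n.
Arguments ups_pred {k E} N x.
Arguments upsT {k E} N x.
Arguments UpsT {k E N x} uval _.
Arguments uval {k E N x} u.

Section UpsilonModule.
Variables (k : fieldType) (E : kcat k) (N : rcomod E).

Lemma ups_act_in x y (m : upsT N y) (f : chom E x y) :
  rho N (uval m) f \in ups_pred N x.
Proof.
by rewrite unfold_in /ups_pred /ex rho_coassoc comp1f.
Qed.

Definition ups_act x y (m : upsT N y) (f : chom E x y) : upsT N x :=
  UpsT _ (ups_act_in m f).

Lemma ups_act_linl x y (f : chom E x y) (a : k) (m1 m2 : upsT N y) :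
  ups_act (a *: m1 + m2) f = a *: ups_act m1 f + ups_act m2 f.
Proof. by apply: val_inj => /=; rewrite rho_linl. Qed.

Lemma ups_act_linr x y (m : upsT N y) (a : k) (f1 f2 : chom E x y) :
  ups_act m (a *: f1 + f2) = a *: ups_act m f1 + ups_act m f2.
Proof. by apply: val_inj => /=; rewrite rho_linr. Qed.

Lemma ups_act_id x (m : upsT N x) : ups_act m (cid x) = m.
Proof. by apply: val_inj; case: m => n /= /eqP. Qed.

Lemma ups_act_comp x y z (g : chom E x y) (h : chom E y z) (m : upsT N z) :
  ups_act (ups_act m h) g = ups_act m (ccomp g h).
Proof. by apply: val_inj; rewrite /= rho_coassoc. Qed.

Definition Upsilon : rmod E :=
  RMod ups_act_linl ups_act_linr ups_act_id ups_act_comp.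

(* N is locally finite iff Upsilon(N) is *)
Definition locally_finite_comod : Prop := locally_finite_rmod Upsilon.

End UpsilonModule.

Definition in_ups_class (k : fieldType) (E : kcat k) (M : rmod E) : Prop :=
  exists N : rcomod E, locally_finite_comod N /\ rmod_iso M (Upsilon N).

From HB Require Import structures.
From mathcomp Require Import all_boot all_algebra.
From mathcomp Require boolp.
From Stdlib Require List.

Set Implicit Arguments.
Unset Strict Implicit.
Unset Printing Implicit Defensive.

Import GRing.Theory.
Local Open Scope ring_scope.

(* A right E-module lies in the class exactly when it is locally finite and
   finitely supported: every m in M(y) is killed by all f : x -> y for x
   outside a finite set.  Such an M is Upsilon of the comodule
   (+)_x M(x), with coaction n |-> (f |-> n_y . f).  Local finiteness passes
   to extensions by counting dimensions.  For finite support, take m in M(y):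
   its image in N is supported on a finite set S, so for z outside S every
   m . f with f : z -> y comes from L and is finitely supported.  The
   remaining objects, in S, are handled by induction along the strict order
   on the finite set S: a nonzero g : x -> z with x not below z puts x in
   the finite interval between z and z, and one with x strictly below z
   factors through the finite set X_z, on which the induction hypothesis
   holds uniformly because the Hom spaces into z are finite-dimensional. *)

Definition cofinite (T : Type) (P : T -> Prop) : Prop :=
  exists s : seq T, forall x, ~ List.In x s -> P x.

Lemma cofiniteW (T : Type) (P Q : T -> Prop) :
  (forall x, P x -> Q x) -> cofinite P -> cofinite Q.
Proof. by move=> PQ [s Ps]; exists s => x /Ps /PQ. Qed.

Lemma cofiniteI (T : Type) (P Q : T -> Prop) :
  cofinite P -> cofinite Q -> cofinite (fun x => P x /\ Q x).
Proof.
move=> [s Ps] [t Qt]; exists (s ++ t) => x xst.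
by split; [apply: Ps | apply: Qt] => xs; apply: xst; apply: List.in_or_app; auto.
Qed.

Lemma cofinite_all_in (I T : Type) (l : seq I) (A : I -> T -> Prop) :
  (forall i, List.In i l -> cofinite (A i)) ->
  cofinite (fun x => forall i, List.In i l -> A i x).
Proof.
elim: l => [|i l IH] Al; first by exists [::].
have Ai := Al i (or_introl erefl).
have Al' := IH (fun j lj => Al j (or_intror lj)).
by apply: cofiniteW (cofiniteI Ai Al') => x [Aix Alx] j [<-|/Alx].
Qed.

Lemma cofinite_all (I : finType) (T : Type) (A : I -> T -> Prop) :
  (forall i, cofinite (A i)) -> cofinite (fun x => forall i, A i x).
Proof.
move=> Ai; apply: cofiniteW (cofinite_all_in (l := enum I) (fun i _ => Ai i)).
move=> x Ax i; apply: Ax; have : i \in enum I by rewrite mem_enum.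
by elim: (enum I) => //= j s IH; rewrite inE => /orP[/eqP->|/IH]; auto.
Qed.

Lemma big1_In (V : nmodType) (I : Type) (r : seq I) (F : I -> V) :
  (forall i, List.In i r -> F i = 0) -> \sum_(i <- r) F i = 0.
Proof.
elim: r => [|i r IH] F0; first by rewrite big_nil.
by rewrite big_cons F0 ?add0r ?IH //; [move=> j rj; apply: F0; right | left].
Qed.

Section FiniteDimension.
Variable k : fieldType.

Section LinearImage.
Variables (V W : lmodType k) (f : V -> W).
Hypothesis f_lin : linear f.

HB.instance Definition _ := GRing.isLinear.Build k V W *:%R f f_lin.

Lemma findim_surj : (forall w, exists v, f v = w) -> findim V -> findim W.
Proof.
move=> f_surj [n [e eP]]; exists n, (f \o e) => w.
have [v <-] := f_surj w; have [c ->] := eP v.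
by exists c; rewrite linear_sum; under eq_bigr do rewrite linearZ.
Qed.

End LinearImage.

Lemma findim_bij (V W : lmodType k) (f : {linear V -> W}) :
  bijective f -> findim V <-> findim W.
Proof.
case=> g fK gK; split; apply: findim_surj.
- exact: linearP.
- by move=> w; exists (g w).
- exact: can2_linear fK gK.
- by move=> v; exists (f v).
Qed.

Lemma findim_ext (U V W : lmodType k) (f : {linear U -> V}) (g : {linear V -> W}) :
  (forall w, exists v, g v = w) -> (forall v, g v = 0 -> exists u, f u = v) ->
  findim U -> findim W -> findim V.
Proof.
move=> g_surj ker_g [m [eU eUP]] [n [eW eWP]].
have [lift liftK] : exists lift : 'I_n -> V, forall i, g (lift i) = eW i.
  exact: fin_all_exists (fun i => g_surj (eW i)).
exists (m + n)%N, (fun i => match split i with inl j => f (eU j) | inr j => lift j end).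
move=> v; have [cW gv] := eWP (g v).
have [u fu] : exists u, f u = v - \sum_(j < n) cW j *: lift j.
  apply: ker_g; rewrite linearB linear_sum gv -sumrB.
  by apply: big1 => i _; rewrite linearZ liftK subrr.
have [cU uE] := eUP u.
exists (fun i => match split i with inl j => cU j | inr j => cW j end).
rewrite big_split_ord /=.
under eq_bigr do rewrite (unsplitK (inl _)).
under [X in _ = _ + X]eq_bigr do rewrite (unsplitK (inr _)).
have -> : \sum_(j < m) cU j *: f (eU j) = f u.
  by rewrite uE linear_sum; apply: eq_bigr => j _; rewrite linearZ.
by rewrite fu subrK.
Qed.

End FiniteDimension.

Lemma count_lt_subpred (T : Type) (a1 a2 : pred T) (s : seq T) x :
  subpred a1 a2 -> List.In x s -> a2 x -> ~~ a1 x -> (count a1 s < count a2 s)%N.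
Proof.
move=> a12 + a2x a1x; elim: s => //= y s IH [->|xs].
  by rewrite a2x (negbTE a1x) ltnS sub_count.
have a12y : (a1 y <= a2 y)%N by case: (a1 y) (a12 y) => // ->.
by rewrite -addnS; apply: leq_add a12y (IH xs).
Qed.

(* No well-foundedness of R is assumed: induction is only needed on the finite
   list S, on which a strict order is well founded. *)
Lemma strict_order_ind (T : Type) (R : T -> T -> Prop) (S : seq T) (Q : T -> Prop) :
  (forall x y z, R x y -> R y z -> R x z) -> (forall x, ~ R x x) ->
  (forall z, ~ List.In z S -> Q z) ->
  (forall z, (forall x, R x z -> Q x) -> Q z) ->
  forall z, Q z.
Proof.
move=> R_trans R_irr QS Q_ind.
pose mu z := count (fun w => boolp.asbool (R w z)) S.
suff Q_mu n z : (mu z < n)%N -> Q z by move=> z; apply: (Q_mu (mu z).+1).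
elim: n z => // n IHn z; rewrite ltnS => muz; apply: Q_ind => x Rxz.
have [xS|xS] := boolp.pselect (List.In x S); last exact: QS.
apply: IHn; apply: leq_trans muz; apply: count_lt_subpred xS _ _.
- by move=> w /boolp.asboolP Rwx; apply/boolp.asboolP; apply: R_trans Rxz.
- exact/boolp.asboolP.
- exact/boolp.asboolPn/R_irr.
Qed.

Section ModuleLinearity.
Variables (k : fieldType) (E : kcat k) (M : rmod E).

Definition mact_by x y (f : chom E x y) (m : mval M y) : mval M x := mact M m f.
Definition mact_of x y (m : mval M y) (f : chom E x y) : mval M x := mact M m f.

HB.instance Definition _ x y (f : chom E x y) :=
  GRing.isLinear.Build k _ _ *:%R (@mact_by x y f) (mact_linl f).
HB.instance Definition _ x y (m : mval M y) :=
  GRing.isLinear.Build k _ _ *:%R (@mact_of x y m) (mact_linr m).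

Lemma mact0l x y (f : chom E x y) : mact M 0 f = 0.
Proof. exact: linear0 (mact_by f). Qed.

Lemma mact0r x y (m : mval M y) : mact M m (0 : chom E x y) = 0.
Proof. exact: linear0 (@mact_of x y m). Qed.

Lemma mactZl x y (f : chom E x y) (c : k) (m : mval M y) :
  mact M (c *: m) f = c *: mact M m f.
Proof. exact: (linearZZ (mact_by f) c m). Qed.

Lemma mactZr x y (m : mval M y) (c : k) (f : chom E x y) :
  mact M m (c *: f) = c *: mact M m f.
Proof. exact: (linearZZ (@mact_of x y m) c f). Qed.

Lemma mact_suml x y (f : chom E x y) (I : Type) (r : seq I) (P : pred I) F :
  mact M (\sum_(i <- r | P i) F i) f = \sum_(i <- r | P i) mact M (F i) f.
Proof. exact: (linear_sum (mact_by f) r P F). Qed.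

Lemma mact_sumr x y (m : mval M y) (I : Type) (r : seq I) (P : pred I)
    (F : I -> chom E x y) :
  mact M m (\sum_(i <- r | P i) F i) = \sum_(i <- r | P i) mact M m (F i).
Proof. exact: (linear_sum (@mact_of x y m) r P F). Qed.

End ModuleLinearity.

Section FiniteSupport.
Variables (k : fieldType) (E : kcat k).

Definition fin_supp (M : rmod E) y (m : mval M y) : Prop :=
  cofinite (fun x => forall f : chom E x y, mact M m f = 0).

Definition finitely_supported (M : rmod E) : Prop :=
  forall y (m : mval M y), fin_supp m.

Lemma fin_supp_hom (M P : rmod E) (phi : rmod_hom M P) y (m : mval M y) :
  fin_supp m -> fin_supp (mhom phi y m).
Proof. by apply: cofiniteW => x m0 f; rewrite -mhom_nat m0 linear0. Qed.

Lemma fin_supp_hom_inj (M P : rmod E) (phi : rmod_hom M P) y (m : mval M y) :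
  (forall x, injective (mhom phi x)) -> fin_supp (mhom phi y m) -> fin_supp m.
Proof.
by move=> phi_inj; apply: cofiniteW => x phim0 f; apply: phi_inj;
  rewrite mhom_nat phim0 linear0.
Qed.

Lemma Upsilon_fin_supp (N : rcomod E) : finitely_supported (Upsilon N).
Proof.
move=> y u; have [s s0] := rho_fin (uval u).
exists (List.map fst s) => x xs f; apply: val_inj; apply: s0 => xys.
by apply: xs; apply: (List.in_map fst s (x, y)).
Qed.

Lemma ups_class_locally_finite (M : rmod E) :
  in_ups_class M -> locally_finite_rmod M.
Proof. by move=> [N [lfN [phi phi_bij]]] x; apply/(findim_bij (phi_bij x)). Qed.

Lemma ups_class_fin_supp (M : rmod E) : in_ups_class M -> finitely_supported M.
Proof.
move=> [N [_ [phi phi_bij]]] y m.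
by apply: (fin_supp_hom_inj (fun x => bij_inj (phi_bij x))); apply: Upsilon_fin_supp.
Qed.

End FiniteSupport.

Section DirectSum.
Variables (k : fieldType) (E : kcat k) (M : rmod E).

Record dsum := DSum {
  dsval : forall x, mval M x;
  dsval_cofinite : cofinite (fun x => dsval x = 0)
}.

Lemma dsum_ext (u v : dsum) : (forall x, dsval u x = dsval v x) -> u = v.
Proof.
case: u v => [fu pu] [fv pv] /= uv.
have fuv := boolp.functional_extensionality_dep uv; subst fv.
by rewrite (boolp.Prop_irrelevance pu pv).
Qed.

HB.instance Definition _ := boolp.gen_eqMixin dsum.
HB.instance Definition _ := boolp.gen_choiceMixin dsum.

Lemma cofinite_dsum_map (F : forall x, mval M x -> mval M x) (u : dsum) :
  (forall x, F x 0 = 0) -> cofinite (fun x => F x (dsval u x) = 0).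
Proof. by move=> F0; apply: cofiniteW (dsval_cofinite u) => x ->. Qed.

Lemma cofinite_dsumD (u v : dsum) : cofinite (fun x => dsval u x + dsval v x = 0).
Proof.
by apply: cofiniteW (cofiniteI (dsval_cofinite u) (dsval_cofinite v)) => x [-> ->];
  rewrite addr0.
Qed.

Definition dsum0 : dsum := @DSum (fun x => 0) (ex_intro _ [::] (fun _ _ => erefl)).
Definition dsum_add (u v : dsum) : dsum := DSum (cofinite_dsumD u v).
Definition dsum_opp (u : dsum) : dsum :=
  DSum (@cofinite_dsum_map (fun x m => - m) u (fun x => oppr0 _)).
Definition dsum_scale (c : k) (u : dsum) : dsum :=
  DSum (@cofinite_dsum_map (fun x m => c *: m) u (fun x => scaler0 _ c)).

Lemma dsum_addA : associative dsum_add.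
Proof. by move=> u v w; apply: dsum_ext => x /=; rewrite addrA. Qed.
Lemma dsum_addC : commutative dsum_add.
Proof. by move=> u v; apply: dsum_ext => x /=; rewrite addrC. Qed.
Lemma dsum_add0 : left_id dsum0 dsum_add.
Proof. by move=> u; apply: dsum_ext => x /=; rewrite add0r. Qed.
Lemma dsum_addN : left_inverse dsum0 dsum_opp dsum_add.
Proof. by move=> u; apply: dsum_ext => x /=; rewrite addNr. Qed.

HB.instance Definition _ :=
  GRing.isZmodule.Build dsum dsum_addA dsum_addC dsum_add0 dsum_addN.

Lemma dsum_scaleA a b u : dsum_scale a (dsum_scale b u) = dsum_scale (a * b) u.
Proof. by apply: dsum_ext => x /=; rewrite scalerA. Qed.
Lemma dsum_scale1 : left_id 1 dsum_scale.
Proof. by move=> u; apply: dsum_ext => x /=; rewrite scale1r. Qed.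
Lemma dsum_scaleDr : right_distributive dsum_scale +%R.
Proof. by move=> a u v; apply: dsum_ext => x /=; rewrite scalerDr. Qed.
Lemma dsum_scaleDl u : {morph dsum_scale^~ u : a b / a + b}.
Proof. by move=> a b; apply: dsum_ext => x /=; rewrite scalerDl. Qed.

HB.instance Definition _ := GRing.Zmodule_isLmodule.Build k dsum
  dsum_scaleA dsum_scale1 dsum_scaleDr dsum_scaleDl.

Definition delta x (v : mval M x) : forall z, mval M z := fun z =>
  match boolp.pselect (x = z) with
  | left e => eq_rect x (mval M) v z e
  | right _ => 0
  end.

Lemma delta_id x (v : mval M x) : delta v x = v.
Proof.
rewrite /delta; case: boolp.pselect => // e.
by rewrite (boolp.Prop_irrelevance e erefl).
Qed.

Lemma delta_neq x (v : mval M x) z : x <> z -> delta v z = 0.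
Proof. by rewrite /delta; case: boolp.pselect. Qed.

Lemma sum_delta_notin (g : forall x, mval M x) (s : seq (cobj E)) z :
  ~ List.In z s -> \sum_(x <- s) delta (g x) z = 0.
Proof. by move=> zs; apply: big1_In => x xs; apply: delta_neq => xz; subst. Qed.

Lemma sum_delta_in (g : forall x, mval M x) (s : seq (cobj E)) z :
  List.NoDup s -> List.In z s -> \sum_(x <- s) delta (g x) z = g z.
Proof.
elim: s => // x s IH /List.NoDup_cons_iff[xs s_uniq]; rewrite big_cons.
case=> [<-|zs]; first by rewrite delta_id sum_delta_notin ?addr0.
by rewrite delta_neq ?add0r ?IH // => xz; subst.
Qed.

Lemma delta_cofinite x (v : mval M x) : cofinite (fun z => delta v z = 0).
Proof. by exists [:: x] => z xz; apply: delta_neq => e; apply: xz; left. Qed.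

Definition dsum_in x (v : mval M x) : dsum := DSum (delta_cofinite v).

Lemma dsum_in_lin x : linear (@dsum_in x).
Proof.
move=> c v w; apply: dsum_ext => z /=; rewrite /delta.
by case: boolp.pselect => [e|_]; [case: z / e | rewrite scaler0 addr0].
Qed.

HB.instance Definition _ x :=
  GRing.isLinear.Build k (mval M x) dsum _ (@dsum_in x) (@dsum_in_lin x).

Lemma dsval_sum (I : Type) (r : seq I) (F : I -> dsum) z :
  dsval (\sum_(i <- r) F i) z = \sum_(i <- r) dsval (F i) z.
Proof. by apply: (big_morph (dsval^~ z)). Qed.

Definition dsum_rho x y (n : dsum) (f : chom E x y) : dsum :=
  dsum_in (mact M (dsval n y) f).

Lemma dsum_rho_linl x y (f : chom E x y) (c : k) (n1 n2 : dsum) :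
  dsum_rho (c *: n1 + n2) f = c *: dsum_rho n1 f + dsum_rho n2 f.
Proof. by rewrite /dsum_rho /= mact_linl linearP. Qed.

Lemma dsum_rho_linr x y (n : dsum) (c : k) (f1 f2 : chom E x y) :
  dsum_rho n (c *: f1 + f2) = c *: dsum_rho n f1 + dsum_rho n f2.
Proof. by rewrite /dsum_rho mact_linr linearP. Qed.

Hypothesis M_fin_supp : finitely_supported M.

Lemma dsum_rho_fin (n : dsum) : exists s : seq (cobj E * cobj E),
  forall x y, ~ List.In (x, y) s -> forall f : chom E x y, dsum_rho n f = 0.
Proof.
have [ys n0] := dsval_cofinite n.
have [xs xs0] := cofinite_all_in (l := ys) (fun y _ => M_fin_supp (dsval n y)).
exists (List.list_prod xs ys) => x y xys f.
have [yys|yys] := boolp.pselect (List.In y ys).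
  by rewrite /dsum_rho xs0 ?linear0 // => xxs; apply: xys; apply: List.in_prod.
by rewrite /dsum_rho n0 // mact0l linear0.
Qed.

Lemma dsum_rho_counit (n : dsum) (s : seq (cobj E)) : List.NoDup s ->
  (forall x, ~ List.In x s -> dsum_rho n (cid x) = 0) ->
  \sum_(x <- s) dsum_rho n (cid x) = n.
Proof.
move=> s_uniq n0; apply: dsum_ext => z; rewrite dsval_sum.
under eq_bigr do rewrite /dsum_rho mact_id.
have [zs|zs] := boolp.pselect (List.In z s); first exact: sum_delta_in.
have := congr1 (dsval^~ z) (n0 z zs).
by rewrite /dsum_rho mact_id /= delta_id sum_delta_notin // => ->.
Qed.

Lemma dsum_rho_coassoc x z y (g : chom E x z) (h : chom E z y) (n : dsum) :
  dsum_rho (dsum_rho n h) g = dsum_rho n (ccomp g h).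
Proof. by rewrite /dsum_rho /= delta_id mact_comp. Qed.

Lemma dsum_rho_coassoc0 a b c d (g : chom E a b) (h : chom E c d) (n : dsum) :
  b <> c -> dsum_rho (dsum_rho n h) g = 0.
Proof.
by move=> bc; rewrite /dsum_rho /= delta_neq 1?mact0l ?linear0 // => cb; subst.
Qed.

Definition dsum_comod : rcomod E :=
  RComod dsum_rho_linl dsum_rho_linr dsum_rho_fin dsum_rho_counit
    dsum_rho_coassoc dsum_rho_coassoc0.

Lemma dsum_in_ups x (v : mval M x) :
  (dsum_in v : cval dsum_comod) \in ups_pred dsum_comod x.
Proof. by rewrite unfold_in /ups_pred /ex /= /dsum_rho /= delta_id mact_id. Qed.

Definition dsum_ups x (v : mval M x) : upsT dsum_comod x := UpsT _ (dsum_in_ups v).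

Lemma dsum_ups_lin x : linear (@dsum_ups x).
Proof. by move=> c v w; apply: val_inj; rewrite /= linearP. Qed.

HB.instance Definition _ x :=
  GRing.isLinear.Build k (mval M x) (upsT dsum_comod x) _ (@dsum_ups x) (@dsum_ups_lin x).

Lemma dsum_ups_nat x y (f : chom E x y) (m : mval M y) :
  dsum_ups (mact M m f) = mact (Upsilon dsum_comod) (dsum_ups m) f.
Proof. by apply: val_inj; rewrite /= /dsum_rho /= delta_id. Qed.

Definition dsum_ups_hom : rmod_hom M (Upsilon dsum_comod) :=
  @RModHom _ _ M (Upsilon dsum_comod) (fun x => @dsum_ups x) dsum_ups_nat.

Lemma dsum_ups_bij x : bijective (mhom dsum_ups_hom x).
Proof.
exists (fun u : upsT dsum_comod x => dsval (uval u) x) => [v|u]; first exact: delta_id.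
apply: val_inj; case: u => n /= /eqP {2}<-.
by rewrite /ex /= /dsum_rho mact_id.
Qed.

Lemma ups_class_of_fin_supp : locally_finite_rmod M -> in_ups_class M.
Proof.
move=> M_lf; exists dsum_comod; split; last by exists dsum_ups_hom; apply: dsum_ups_bij.
by move=> x; apply/(findim_bij (dsum_ups_bij x)).
Qed.

End DirectSum.

Section Extension.
Variables (k : fieldType) (E : kcat k).

Lemma prec_trans (x y z : cobj E) : prec x y -> prec y z -> prec x z.
Proof.
move=> [xy yx] [yz zy]; split; first exact: Relation_Operators.t_trans xy yz.
by move=> zx; apply: zy; apply: Relation_Operators.t_trans zx xy.
Qed.

Lemma prec_irr (x : cobj E) : ~ prec x x.
Proof. by case. Qed.

Lemma fin_supp_uniform (M : rmod E) xi z (u : mval M z) :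
  findim (chom E xi z) -> (forall h : chom E xi z, fin_supp (mact M u h)) ->
  cofinite (fun x => forall (h : chom E xi z) (g : chom E x xi),
    mact M (mact M u h) g = 0).
Proof.
move=> [n [e eP]] uh; apply: cofiniteW (cofinite_all (fun i => uh (e i))).
move=> x ue0 h g; have [c ->] := eP h.
rewrite mact_sumr mact_suml big1 // => i _.
by rewrite mactZr mactZl ue0 scaler0.
Qed.

Lemma fin_supp_of_prec (M : rmod E) : left_strictly_locally_finite E ->
  forall z (u : mval M z),
  (forall xi, prec xi z -> forall h : chom E xi z, fin_supp (mact M u h)) ->
  fin_supp u.
Proof.
move=> [[hom_fd interval_fin] factorP] z u uh.
have [B BP] := interval_fin z z.
have [X [Xprec Xfactor]] := factorP z.
have [U UP] := cofinite_all_in (l := X)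
  (fun xi Xxi => fin_supp_uniform (hom_fd xi z) (uh xi (Xprec xi Xxi))).
exists (B ++ U) => x xBU f.
have [->|f_nz] := eqVneq f 0; first exact: mact0r.
have xz : preceq x z by apply: Relation_Operators.t_step; exists f.
have [zx|zx] := boolp.pselect (preceq z x).
  by case: xBU; apply: List.in_or_app; left; apply: BP.
have [l [lX ->]] := Xfactor x f (conj xz zx).
rewrite mact_sumr; apply: big1_In => t lt; rewrite -mact_comp.
by apply: UP (lX t lt) _ _ => xU; apply: xBU; apply: List.in_or_app; right.
Qed.

Variables (L M N : rmod E) (a : rmod_hom L M) (b : rmod_hom M N).
Hypothesis ab_exact : short_exact a b.

Lemma short_exact_locally_finite :
  locally_finite_rmod L -> locally_finite_rmod N -> locally_finite_rmod M.
Proof.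
move=> L_lf N_lf x; have [_ [b_surj ker_b]] := ab_exact x.
exact: findim_ext b_surj (fun v bv => (ker_b v).1 bv) (L_lf x) (N_lf x).
Qed.

Lemma short_exact_fin_supp : left_strictly_locally_finite E ->
  finitely_supported L -> finitely_supported N -> finitely_supported M.
Proof.
move=> hE L_fs N_fs y m; have [S bm0] := N_fs y (mhom b y m).
suff mf_fs z (f : chom E z y) : fin_supp (mact M m f).
  by have := mf_fs y (cid y); rewrite mact_id.
move: z f; apply: (strict_order_ind (@prec_trans) (@prec_irr) (S := S)).
  move=> z zS f; have [_ [_ ker_b]] := ab_exact z.
  have [l <-] : exists l, mhom a z l = mact M m f.
    by apply/(ker_b _).1; rewrite mhom_nat bm0.
  exact: fin_supp_hom.
move=> z IH f; apply: (fin_supp_of_prec hE) => xi xiz h.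
by rewrite mact_comp; apply: IH.
Qed.

End Extension.

Theorem corollary6p4 (k : fieldType) (E : kcat k)
  (hE : left_strictly_locally_finite E)
  (L M N : rmod E) (a : rmod_hom L M) (b : rmod_hom M N) :
  short_exact a b -> in_ups_class L -> in_ups_class N -> in_ups_class M.
Proof.
move=> ab_exact L_ups N_ups; apply: ups_class_of_fin_supp.
- apply: short_exact_fin_supp ab_exact hE _ _; exact: ups_class_fin_supp.
- apply: short_exact_locally_finite ab_exact _ _; exact: ups_class_locally_finite.
Qed.
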